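(* Let $p\in(0,1)$ and let $B$ be a $\lfloor 1/p\rfloor$-matching (a set of edges of a graph in which every vertex is incident to at most $\lfloor 1/p\rfloor$ edges). Let $B_p$ be the random subset of $B$ obtained by keeping each edge independently with probability $p$. Then $$\mathbb{E}[\mu(B_p)]\ \ge\ \frac{|B|}{\lfloor 1/p\rfloor}\cdot\frac{1-3p}{3}.$$
   Context: $\mu(X)$ denotes the maximum matching size of the graph formed by the edge set $X$. *)

From HB Require Import structures.
From mathcomp Require Import all_boot all_order all_algebra.
Set Implicit Arguments. Unset Strict Implicit. Unset Printing Implicit Defensive.
Import Order.TTheory GRing.Theory Num.Theory.

Definition edge_set (V : finType) (X : {set {set V}}) : bool :=
  [forall e in X, #|e| == 2]%N.

Definition edeg (V : finType) (X : {set {set V}}) (v : V) : nat :=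
  #|[set e in X | v \in e]|.

Definition is_bmatching (V : finType) (b : nat) (X : {set {set V}}) : bool :=
  [forall v, edeg X v <= b]%N.

Definition mu (V : finType) (X : {set {set V}}) : nat :=
  \max_(M : {set {set V}} | (M \subset X) && is_bmatching 1 M) #|M|.

(* E[mu(X_p)] where X_p keeps each edge of X independently with probability p *)
Definition exp_mu_sample (R : numDomainType) (V : finType) (p : R)
    (X : {set {set V}}) : R :=
  \sum_(S : {set {set V}} | S \subset X)
     (p ^+ #|S| * (1 - p) ^+ (#|X| - #|S|) * (mu S)%:R).

(* Greedy matching: take an edge e of S of minimum degree d in the line graph,
   match it and discard its closed neighbourhood.  This removes d + 1 edges,
   at least d (d + 1) ordered pairs of adjacent edges, and gains one matching
   edge; as 5 (d + 1) <= 9 + d (d + 1) for every d, induction gives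
   5 |S| <= 9 mu(S) + P(S), where P(S) counts ordered pairs of adjacent edges.
   In expectation E |B_p| = p |B| and E P(B_p) = p^2 P(B), and in a b-matching
   every edge meets at most 2 (b - 1) others.  For b = floor(1/p), i.e.
   1 - p < b p <= 1, the resulting bound on E mu(B_p) is the claimed one. *)

From HB Require Import structures.
From mathcomp Require Import all_boot all_order all_algebra.
From mathcomp Require Import zify ring lra.
Import Order.TTheory GRing.Theory Num.Theory.

Set Implicit Arguments.
Unset Strict Implicit.
Unset Printing Implicit Defensive.

Section GreedyMatching.
Variable V : finType.
Implicit Types (S M : {set {set V}}) (e f : {set V}).

Definition edge_adj e f : bool := (f != e) && ~~ [disjoint e & f].

Definition adj_deg S e : nat := #|[set f in S | edge_adj e f]|.

Definition adj_pairs S : nat := \sum_(e in S) adj_deg S e.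

Definition closed_nbhd S e := e |: [set f in S | edge_adj e f].

Lemma bmatching_set0 b : is_bmatching b (set0 : {set {set V}}).
Proof.
apply/forallP => v; rewrite /edeg (_ : [set _ in set0 | _] = set0) ?cards0 //.
by apply/setP => f; rewrite !inE.
Qed.

Lemma matching_setU1 e M :
  is_bmatching 1 M -> {in M, forall f, [disjoint e & f]} ->
  is_bmatching 1 (e |: M).
Proof.
move=> /forallP Mm eM; apply/forallP => v; rewrite /edeg.
have [ve | vNe] := boolP (v \in e).
  rewrite -(cards1 e) subset_leq_card //; apply/subsetP => f.
  rewrite !inE => /andP[/orP[// | fM] vf].
  by move/disjointFr: (eM f fM) => /(_ v ve); rewrite vf.
apply: leq_trans (Mm v); apply: subset_leq_card; apply/subsetP => f.
rewrite !inE => /andP[/orP[/eqP fe | ->] // vf].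
by rewrite -fe vf in vNe.
Qed.

Lemma leq_card_mu M S : M \subset S -> is_bmatching 1 M -> #|M| <= mu S.
Proof.
by move=> MS Mm; apply: (leq_bigmax_cond (F := fun M => #|M|)); rewrite MS Mm.
Qed.

Lemma mu_witness S :
  exists2 M : {set {set V}}, M \subset S /\ is_bmatching 1 M & mu S = #|M|.
Proof.
set A := [pred M : {set {set V}} | (M \subset S) && is_bmatching 1 M].
have A0 : 0 < #|A|.
  by apply/card_gt0P; exists set0; rewrite inE sub0set bmatching_set0.
have [M /andP[MS Mm] muM] := eq_bigmax_cond (fun M => #|M|) A0.
by exists M.
Qed.

Lemma mu_ltn_setU1 S S' e :
  e \in S -> S' \subset S -> e \notin S' -> {in S', forall f, [disjoint e & f]} ->
  mu S' < mu S.
Proof.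
move=> eS S'S eNS' eS'; have [M [MS' Mm] ->] := mu_witness S'.
have eNM : e \notin M by apply: contra eNS'; apply: (subsetP MS').
have <- : #|e |: M| = #|M|.+1 by rewrite cardsU1 eNM.
rewrite leq_card_mu //.
  by rewrite subUset sub1set eS (subset_trans MS').
by apply: matching_setU1 => // f /(subsetP MS'); apply: eS'.
Qed.

Lemma card_closed_nbhd S e : #|closed_nbhd S e| = (adj_deg S e).+1.
Proof. by rewrite cardsU1 inE /edge_adj eqxx andbF. Qed.

Lemma closed_nbhd_sub S e : e \in S -> closed_nbhd S e \subset S.
Proof.
by move=> eS; rewrite subUset sub1set eS; apply/subsetP => f; rewrite inE => /andP[].
Qed.

Lemma mu_setD_closed_nbhd S e : e \in S -> mu (S :\: closed_nbhd S e) < mu S.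
Proof.
move=> eS; apply: (mu_ltn_setU1 eS (subsetDl _ _)); first by rewrite !inE eqxx.
move=> f; rewrite !inE negb_or => /andP[/andP[fe nadj fS]].
by move: nadj; rewrite fS /edge_adj fe negbK.
Qed.

Lemma adj_deg_subset S S' e : S' \subset S -> adj_deg S' e <= adj_deg S e.
Proof.
move=> S'S; apply: subset_leq_card; apply/subsetP => f.
by rewrite !inE => /andP[/(subsetP S'S) -> ->].
Qed.

Lemma greedy_step_arith d : 5 * d.+1 <= 9 + d.+1 * d.
Proof. by case: d => [|[|[|d]]] //; nia. Qed.

Lemma card_le_mu_adj_pairs S : 5 * #|S| <= 9 * mu S + adj_pairs S.
Proof.
have [n] := ubnP #|S|; elim: n S => // n IH S /ltnSE leSn.
have [-> | [e0 e0S]] := set_0Vmem S; first by rewrite cards0.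
have [e eS emin] := arg_minnP (adj_deg S) e0S.
set d := adj_deg S e; pose N : {set {set V}} := closed_nbhd S e.
have NS : N \subset S := closed_nbhd_sub eS.
have cardS : #|S| = d.+1 + #|S :\: N|.
  by rewrite -card_closed_nbhd -(cardsID N S) (setIidPr NS).
have pairsS : d.+1 * d + adj_pairs (S :\: N) <= adj_pairs S.
  rewrite [adj_pairs S](big_setID N) (setIidPr NS) /=; apply: leq_add.
    rewrite -card_closed_nbhd -sum_nat_const; apply: leq_sum => f fN.
    exact/emin/(subsetP NS).
  by apply: leq_sum => f _; apply/adj_deg_subset/subsetDl.
have IHN : 5 * #|S :\: N| <= 9 * mu (S :\: N) + adj_pairs (S :\: N).
  by apply: IH; move: leSn; rewrite cardS; lia.
have muS : mu (S :\: N) < mu S := mu_setD_closed_nbhd eS.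
have := greedy_step_arith d; lia.
Qed.

End GreedyMatching.

Local Open Scope ring_scope.

Lemma big_subset_mkcond {R : Type} {idx : R} {op : Monoid.com_law idx}
    {I : finType} {A B : {set I}} (F : I -> R) :
  A \subset B ->
  \big[op/idx]_(i in A) F i = \big[op/idx]_(i in B) (if i \in A then F i else idx).
Proof.
move=> AB; rewrite -big_mkcondr; apply: eq_bigl => i.
by rewrite andb_idl //; apply: (subsetP AB).
Qed.

Lemma sum_supsets_pow (R : comPzSemiRingType) (T : finType) (A D : {set T})
    (p q : R) :
  A \subset D ->
  \sum_(J : {set T} | J \subset D)
     (if A \subset J then p ^+ #|J| * q ^+ (#|D| - #|J|) else 0)
  = p ^+ #|A| * (p + q) ^+ (#|D| - #|A|).
Proof.
move=> AD.
(* The left-hand side is the expansion of \prod_i (F i + G i), J being the set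
   of indices at which the factor F i is chosen. *)
pose F i := if i \in D then p else 0.
pose G i := if i \in A then 0 else if i \in D then q else 1.
have prodFG : \prod_i (F i + G i) = p ^+ #|A| * (p + q) ^+ (#|D| - #|A|).
  rewrite (bigID (mem A)) /=; congr (_ * _).
    rewrite -prodr_const; apply: eq_bigr => i iA.
    by rewrite /F /G iA (subsetP AD i iA) addr0.
  have -> : (#|D| - #|A| = #|D :\: A|)%N by rewrite cardsD (setIidPr AD).
  rewrite -prodr_const [LHS]big_mkcond [RHS]big_mkcond /=.
  apply: eq_bigr => i _; rewrite !inE /F /G.
  by case: (i \in A); case: (i \in D); rewrite /= ?add0r ?addr0.
rewrite -prodFG bigA_distr [LHS]big_mkcond /=; apply: eq_bigr => J _.
have [JD | /subsetPn[i iJ iD]] := boolP (J \subset D); last first.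
  by rewrite (bigD1 i) //= iJ /F (negbTE iD) mul0r.
have [AJ | /subsetPn[i iA iJ]] := boolP (A \subset J); last first.
  by rewrite (bigD1 i) //= (negbTE iJ) /G iA mul0r.
rewrite (bigID (mem J)) /=; congr (_ * _).
  rewrite -prodr_const; apply: eq_bigr => i iJ.
  by rewrite iJ /F (subsetP JD i iJ).
have -> : (#|D| - #|J| = #|D :\: J|)%N by rewrite cardsD (setIidPr JD).
rewrite -prodr_const [LHS]big_mkcond [RHS]big_mkcond /=.
apply: eq_bigr => i _; rewrite !inE /G.
case iJ: (i \in J) => //=.
by rewrite (contraFF (subsetP AJ i) iJ); case: (i \in D).
Qed.

Section Sampling.
Variables (R : comNzRingType) (V : finType) (p : R) (B : {set {set V}}).
Implicit Types (S A : {set {set V}}) (F : {set {set V}} -> R).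

Definition sample_weight S : R := p ^+ #|S| * (1 - p) ^+ (#|B| - #|S|).

Definition expect F : R := \sum_(S : {set {set V}} | S \subset B) sample_weight S * F S.

Lemma sum_sample_weight_supset A :
  A \subset B ->
  \sum_(S : {set {set V}} | S \subset B)
     (if A \subset S then sample_weight S else 0) = p ^+ #|A|.
Proof. by move=> AB; rewrite sum_supsets_pow // addrC subrK expr1n mulr1. Qed.

Lemma expect_card : expect (fun S => #|S|%:R) = p * #|B|%:R.
Proof.
transitivity (\sum_(S : {set {set V}} | S \subset B) \sum_(e in B)
                (if [set e] \subset S then sample_weight S else 0)).
  apply: eq_bigr => S SB; rewrite -sumr_const (big_subset_mkcond _ SB) mulr_sumr.
  by apply: eq_bigr => e _; rewrite sub1set; case: (e \in S); rewrite ?mulr1 ?mulr0.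
rewrite exchange_big /= mulr_natr -sumr_const; apply: eq_bigr => e eB.
by rewrite sum_sample_weight_supset ?sub1set // cards1 expr1.
Qed.

Lemma adj_pairs_sum S :
  S \subset B ->
  (adj_pairs S)%:R = \sum_(e in B) \sum_(f in B)
                       (if [set e; f] \subset S then (edge_adj e f)%:R else 0) :> R.
Proof.
move=> SB; rewrite natr_sum (big_subset_mkcond _ SB); apply: eq_bigr => e _.
have [eS | eNS] := boolP (e \in S); last first.
  by rewrite big1 // => f _; rewrite subUset sub1set (negbTE eNS).
rewrite /adj_deg -sumr_const.
have adjB : [set f in S | edge_adj e f] \subset B.
  by apply/subsetP => f; rewrite inE => /andP[/(subsetP SB)].
rewrite (big_subset_mkcond _ adjB); apply: eq_bigr => f _.
by rewrite inE subUset !sub1set eS; case: (f \in S) => //=; case: edge_adj.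
Qed.

Lemma expect_adj_pairs :
  expect (fun S => (adj_pairs S)%:R) = p ^+ 2 * (adj_pairs B)%:R.
Proof.
transitivity (\sum_(S : {set {set V}} | S \subset B) \sum_(e in B) \sum_(f in B)
    (edge_adj e f)%:R * (if [set e; f] \subset S then sample_weight S else 0)).
  apply: eq_bigr => S SB; rewrite adj_pairs_sum // mulr_sumr; apply: eq_bigr => e _.
  rewrite mulr_sumr; apply: eq_bigr => f _.
  by case: (_ \subset S); rewrite ?mulr0 // mulrC.
rewrite exchange_big /= (adj_pairs_sum (subxx B)) mulr_sumr; apply: eq_bigr => e eB.
rewrite exchange_big mulr_sumr; apply: eq_bigr => f fB /=.
have efB : [set e; f] \subset B by rewrite subUset !sub1set eB fB.
rewrite -mulr_sumr sum_sample_weight_supset // efB.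
have [ef | _] := boolP (edge_adj e f); last by rewrite mul0r mulr0.
by rewrite cards2 eq_sym; case/andP: ef => -> _; rewrite mul1r mulr1.
Qed.

End Sampling.

Lemma sample_weight_ge0 (R : numDomainType) (V : finType) (p : R)
    (B S : {set {set V}}) :
  0 <= p <= 1 -> 0 <= sample_weight p B S.
Proof.
by case/andP=> p0 p1; rewrite mulr_ge0 ?exprn_ge0 // subr_ge0.
Qed.

Lemma exp_mu_sample_ge (R : numDomainType) (V : finType) (p : R)
    (B : {set {set V}}) :
  0 <= p <= 1 ->
  5 * (p * #|B|%:R) - p ^+ 2 * (adj_pairs B)%:R <= 9 * exp_mu_sample p B.
Proof.
move=> p01; rewrite -expect_card -expect_adj_pairs.
have -> : exp_mu_sample p B = expect p B (fun S => (mu S)%:R) by [].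
rewrite /expect !mulr_sumr -sumrB; apply: ler_sum => S _.
rewrite !(mulrCA _ (sample_weight p B S)) -mulrBr.
rewrite ler_wpM2l ?sample_weight_ge0 // lerBlDr -!natrM -natrD ler_nat.
exact: card_le_mu_adj_pairs.
Qed.

Section DegreeBound.
Variables (V : finType) (b : nat) (B : {set {set V}}).
Hypotheses (graphB : edge_set B) (matchB : is_bmatching b B).

Let star u := [set f in B | u \in f].

Lemma card_star_setD1 e u : e \in B -> u \in e -> (#|star u :\ e| < b)%N.
Proof.
move=> eB ue; have := forallP matchB u; rewrite /edeg -/(star u).
by rewrite (cardsD1 e) inE eB ue.
Qed.

Lemma adj_deg_le e : e \in B -> (adj_deg B e + 2 <= 2 * b)%N.
Proof.
move=> eB; have /cards2P[u [v [_ de]]] := implyP (forallP graphB e) eB.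
have ue : u \in e by rewrite de !inE eqxx.
have ve : v \in e by rewrite de !inE eqxx orbT.
have adj_sub : [set f in B | edge_adj e f] \subset (star u :\ e) :|: (star v :\ e).
  apply/subsetP => f; rewrite !inE /edge_adj => /andP[fB /andP[fe]].
  case/pred0Pn => x /andP[/= xe xf]; rewrite fe fB /=.
  by move: xe; rewrite de !inE => /orP[] /eqP <-; rewrite xf ?orbT.
have := leq_trans (subset_leq_card adj_sub) (leq_card_setU _ _).
have := card_star_setD1 eB ue; have := card_star_setD1 eB ve.
rewrite /adj_deg; lia.
Qed.

Lemma adj_pairs_le : (adj_pairs B + 2 * #|B| <= 2 * b * #|B|)%N.
Proof.
rewrite /adj_pairs (mulnC 2) (mulnC (2 * b)) -!sum_nat_const -big_split /=.
by apply: leq_sum => e; apply: adj_deg_le.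
Qed.

End DegreeBound.

Lemma truncn_inv_bounds (R : archiRealFieldType) (p : R) :
  0 < p -> p < 1 ->
  [/\ (0 < Num.truncn p^-1)%N, (Num.truncn p^-1)%:R * p <= 1
    & 1 - p < (Num.truncn p^-1)%:R * p].
Proof.
move=> p0 p1; have p_neq0 := lt0r_neq0 p0.
have /andP[le_b lt_b1] : (Num.truncn p^-1)%:R <= p^-1 < (Num.truncn p^-1).+1%:R.
  by apply: truncn_itv; rewrite invr_ge0 ltW.
split; first by rewrite truncn_gt0 invf_ge1 // ltW.
  by rewrite -(ler_pM2r p0) mulVf // in le_b.
by rewrite -(ltr_pM2r p0) mulVf // -natr1 mulrDl mul1r in lt_b1; lra.
Qed.

Lemma greedy_bound_ineq (R : realFieldType) (p y : R) :
  0 < p -> p < 1 -> 1 - p < y -> y <= 1 ->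
  3 - 9 * p <= 5 * y - 2 * y ^+ 2 + 2 * p * y.
Proof.
move=> p0 p1 lt_y le_y1.
have : 0 <= y * (1 - y) by apply: mulr_ge0; lra.
have : 0 <= p * y by apply: mulr_ge0; lra.
lra.
Qed.

Theorem mainTheorem5 (R : archiRealFieldType) (V : finType) (p : R)
    (B : {set {set V}}) :
  0 < p -> p < 1 ->
  edge_set B ->
  is_bmatching (Num.truncn p^-1) B ->
  exp_mu_sample p B >=
    (#|B|%:R / (Num.truncn p^-1)%:R) * ((1 - 3 * p) / 3).
Proof.
move=> p0 p1 graphB matchB.
have [b_gt0 bp_le1 bp_gt] := truncn_inv_bounds p0 p1.
set b := Num.truncn p^-1 in matchB b_gt0 bp_le1 bp_gt *.
have b_gt0R : 0 < b%:R :> R by rewrite ltr0n.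
set n : R := #|B|%:R; set P : R := (adj_pairs B)%:R.
have n_ge0 : 0 <= n by rewrite ler0n.
have le_P : P <= 2 * (b%:R - 1) * n.
  by have := adj_pairs_le graphB matchB; rewrite -(ler_nat R) natrD !natrM -/n -/P; lra.
have p01 : 0 <= p <= 1 by rewrite !ltW.
have le_E := exp_mu_sample_ge B p01; rewrite -/n -/P in le_E.
have le_Pp2 : p ^+ 2 * P <= p ^+ 2 * (2 * (b%:R - 1) * n).
  by rewrite ler_pM2l ?exprn_gt0.
have le_n := ler_wpM2l n_ge0 (greedy_bound_ineq p0 p1 bp_gt bp_le1).
have le_b := ler_wpM2l (ltW b_gt0R) (le_trans (lerB (lexx _) le_Pp2) le_E).
rewrite -(ler_pM2r b_gt0R) -(ler_pM2r (_ : 0 < 3 :> R)) //.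
have -> : n / b%:R * ((1 - 3 * p) / 3) * b%:R * 3 = n * (1 - 3 * p).
  by field; rewrite lt0r_neq0.
lra.
Qed.
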